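(* Let $c_g\in\mathbb R$, $K_g\ge0$, $\mu\in\mathbb R$, $\sigma\ge0$, and let $g:\mathbb R\to\mathbb R$ satisfy $g(x)-g(y)\le\max\big(|e^{c_gx}-e^{c_gy}|,\,K_g|x-y|\big)$ for all $x,y\in\mathbb R$. Then there exist constants $C_1,C'$ depending only on $c_g,K_g,\mu,\sigma$ such that the following holds for every $\epsilon\in(0,1]$: if $X$ and $Z$ are independent real random variables, $X$ sub-Gaussian with mean $\mu$ and parameter $\sigma$, $Z$ sub-Gaussian with mean $0$ and parameter $\epsilon$, and $Y=X+Z$, $S_X=g(X)$, $S_Y=g(Y)$, then $$\mathbb E\big[(S_X-S_Y)^2\big]\le C_1\epsilon^2+C'\epsilon^4 .$$
   Context: A real random variable $W$ with mean $m$ is called sub-Gaussian with parameter $s\ge0$ if $\mathbb E[\exp(\theta(W-m))]\le\exp(\theta^2s^2/2)$ for all $\theta\in\mathbb R$ (in particular $\mathrm{Var}(W)\le s^2$). *)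

From HB Require Import structures.
From mathcomp Require Import all_boot all_order all_algebra.
From mathcomp Require Import all_classical all_reals all_analysis.
Set Implicit Arguments. Unset Strict Implicit. Unset Printing Implicit Defensive.
Import Order.TTheory GRing.Theory Num.Theory.
Local Open Scope classical_set_scope.
Local Open Scope ring_scope.

Definition independent_rv d (T : measurableType d) (R : realType)
  (P : probability T R) (X Z : T -> R) : Prop :=
  forall A B : set R, measurable A -> measurable B ->
    P (X @^-1` A `&` Z @^-1` B) = (P (X @^-1` A) * P (Z @^-1` B))%E.

Definition subgaussian d (T : measurableType d) (R : realType)
  (P : probability T R) (W : T -> R) (m s : R) : Prop :=
  [/\ 0 <= s,
      P.-integrable setT (EFin \o W),
      ('E_P[W] = m%:E)%E &
      forall theta : R,
        ('E_P[fun w => expR (theta * (W w - m))]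
          <= (expR (theta ^+ 2 * s ^+ 2 / 2))%:E)%E].

From HB Require Import structures.
From mathcomp Require Import all_boot all_order all_algebra.
From mathcomp Require Import all_classical all_reals all_analysis.
From mathcomp Require Import ring lra.
Set Implicit Arguments.
Unset Strict Implicit.
Unset Printing Implicit Defensive.
Import Order.TTheory GRing.Theory Num.Theory.
Local Open Scope ring_scope.

(* Pointwise, (g x - g (x + z))^2 <= (e^(cx) - e^(c(x+z)))^2 + K^2 z^2.  Write the
   first term as e^(2cx) (e^(cz) - 1)^2 and split it by AM-GM with weight eps; with
   |e^u - 1| <= |u| e^|u| and |z|^n <= (n eps)^n e^(|z|/eps) everything is eps^2
   times a combination of e^(4c(x - mu)), e^((1/eps + 4|c|)|z|) and e^(|z|/eps).
   Their expectations are moment generating function values of X and of +-Z, bounded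
   by the sub-Gaussian hypotheses; for Z the exponents (1/eps + 4|c|)^2 eps^2 / 2 and
   1/2 stay bounded since eps <= 1. *)

Section expR_bounds.
Variable R : realType.
Implicit Types a t u z eps : R.

Lemma normr_expR_sub1_le u : `|expR u - 1| <= `|u| * expR `|u|.
Proof.
have eu := expR_gt0 u; have e1 := expR_ge1Dx u.
have eNu : expR (- u) * expR u = 1 by rewrite -expRD addNr expR0.
have [u0|u0] := leP 0 u.
- have : (1 - u) * expR u <= expR (- u) * expR u.
    by rewrite ler_pM2r //; have := expR_ge1Dx (- u); lra.
  by rewrite !ger0_norm //; nra.
- have eNu1 : 1 <= expR (- u) by rewrite -[1]expR0 ler_expR; lra.
  have eu1 : expR u <= 1 by rewrite -[1]expR0 ler_expR; lra.
  by rewrite ler0_norm ?ltr0_norm ?subr_le0 //; nra.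
Qed.

Lemma expR_mul_norm_le t u : expR (t * `|u|) <= expR (t * u) + expR (- t * u).
Proof.
have := expR_gt0 (t * u); have := expR_gt0 (- t * u).
have [u0|u0] := leP 0 u; first by rewrite ger0_norm //; lra.
by rewrite ltr0_norm // mulrN -mulNr; lra.
Qed.

Lemma exprS_le_expR n a : 0 <= a -> a ^+ n.+1 <= n.+1%:R ^+ n.+1 * expR a.
Proof.
move=> a0; set m : R := n.+1%:R.
have m0 : 0 < m by rewrite ltr0n.
have -> : expR a = expR (a / m) ^+ n.+1.
  by rewrite -expRM_natl mulrC divfK ?gt_eqF.
rewrite -exprMn; apply: lerXn2r.
- by rewrite nnegrE.
- by rewrite nnegrE mulr_ge0 ?expR_ge0 ?ltW.
- rewrite -{1}[a](@divfK _ m) ?gt_eqF // mulrC ler_pM2l //.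
  by apply: le_trans (expR_ge1Dx _); rewrite lerDr.
Qed.

Lemma exprS_norm_le_expR n eps z : 0 < eps ->
  `|z| ^+ n.+1 <= (n.+1%:R * eps) ^+ n.+1 * expR (eps^-1 * `|z|).
Proof.
move=> eps0; have b0 : 0 <= eps^-1 * `|z| by rewrite mulr_ge0 // invr_ge0 ltW.
have {1}-> : `|z| = eps * (eps^-1 * `|z|) by rewrite mulVKf ?gt_eqF.
rewrite (exprMn _ eps) [_ * eps]mulrC (exprMn _ eps) -mulrA.
apply: ler_wpM2l; first by rewrite exprn_ge0 ?ltW.
exact: exprS_le_expR.
Qed.

Lemma mulr_le_weighted_sqr eps p q : 0 < eps ->
  p * q <= eps ^+ 2 / 2 * p ^+ 2 + eps ^- 2 / 2 * q ^+ 2.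
Proof.
move=> eps0; have := sqr_ge0 (eps * p - eps^-1 * q).
have -> : (eps * p - eps^-1 * q) ^+ 2
    = eps ^+ 2 * p ^+ 2 + eps ^- 2 * q ^+ 2 - 2 * p * q.
  by rewrite -exprVn; field; rewrite gt_eqF.
lra.
Qed.

Lemma sqr_expR_sub_shift_le c eps x z : 0 < eps ->
  (expR (c * x) - expR (c * (x + z))) ^+ 2 <=
    eps ^+ 2 / 2 * expR (4 * c * x)
  + 128 * c ^+ 4 * eps ^+ 2 * expR ((eps^-1 + 4 * `|c|) * `|z|).
Proof.
move=> eps0; set q := (expR (c * z) - 1) ^+ 2.
have -> : (expR (c * x) - expR (c * (x + z))) ^+ 2 = expR (c * x) ^+ 2 * q.
  by rewrite /q mulrDr expRD; ring.
apply: le_trans (mulr_le_weighted_sqr _ _ eps0) _.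
rewrite -exprM -expRM_natl mulrA lerD2l.
have q2 : q ^+ 2 <= c ^+ 4 * ((4 * eps) ^+ 4 * expR ((eps^-1 + 4 * `|c|) * `|z|)).
  have -> : q ^+ 2 = `|expR (c * z) - 1| ^+ 4.
    by rewrite /q -exprM -normrX ger0_norm // exprn_even_ge0.
  apply: le_trans (_ : (`|c * z| * expR `|c * z|) ^+ 4 <= _).
    by rewrite lerXn2r ?nnegrE ?normr_ge0 ?normr_expR_sub1_le.
  have c4 : `|c| ^+ 4 = c ^+ 4 by rewrite -normrX ger0_norm // exprn_even_ge0.
  rewrite normrM (exprMn _ (`|c| * `|z|)) (exprMn _ `|c|) c4 -mulrA.
  apply: ler_wpM2l; first exact: exprn_even_ge0.
  have -> : expR (`|c| * `|z|) ^+ 4 = expR (4 * `|c| * `|z|).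
    by rewrite -expRM_natl mulrA.
  rewrite (mulrDl _ _ `|z|) expRD mulrA ler_wpM2r ?expR_ge0 //.
  exact: (exprS_norm_le_expR 3).
apply: le_trans (ler_wpM2l _ q2) _.
  by rewrite divr_ge0 // invr_ge0 exprn_ge0 // ltW.
by rewrite le_eqVlt; apply/predU1P; left; rewrite exprMn -exprVn; field; rewrite gt_eqF.
Qed.

End expR_bounds.

Section exp_or_lipschitz_increments.
Variables (R : realType) (c K : R) (g : R -> R).
Hypothesis hg : forall x y : R,
  g x - g y <= Num.max `|expR (c * x) - expR (c * y)| (K * `|x - y|).

Lemma sqr_sub_le_of_exp_lipschitz x y :
  (g x - g y) ^+ 2 <= (expR (c * x) - expR (c * y)) ^+ 2 + K ^+ 2 * (x - y) ^+ 2.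
Proof.
set A : R := `|expR (c * x) - expR (c * y)|; set B : R := K * `|x - y|.
have gxy : `|g x - g y| <= Num.max A B.
  rewrite ler_norml hg andbT lerNl opprB.
  by have := hg y x; rewrite distrC [`|y - x|]distrC.
have -> : (expR (c * x) - expR (c * y)) ^+ 2 = A ^+ 2 by rewrite real_normK ?num_real.
have -> : K ^+ 2 * (x - y) ^+ 2 = B ^+ 2 by rewrite exprMn real_normK ?num_real.
rewrite -real_normK ?num_real //.
have A0 : 0 <= A := normr_ge0 _.
have gxy0 : 0 <= `|g x - g y| := normr_ge0 _.
have := sqr_ge0 A; have := sqr_ge0 B.
have [AB|/ltW BA] := leP A B; [rewrite max_r // in gxy | rewrite max_l // in gxy].
all: move=> *; nra.
Qed.

Lemma sqr_shift_le_of_exp_lipschitz (eps mu x z : R) : 0 < eps ->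
  (g x - g (x + z)) ^+ 2 <=
    eps ^+ 2 / 2 * expR (4 * c * mu) * expR (4 * c * (x - mu))
  + 128 * c ^+ 4 * eps ^+ 2 * expR ((eps^-1 + 4 * `|c|) * `|z|)
  + 4 * K ^+ 2 * eps ^+ 2 * expR (eps^-1 * `|z|).
Proof.
move=> eps0; apply: le_trans (sqr_sub_le_of_exp_lipschitz _ _) _.
have -> : eps ^+ 2 / 2 * expR (4 * c * mu) * expR (4 * c * (x - mu))
    = eps ^+ 2 / 2 * expR (4 * c * x) by rewrite -mulrA -expRD; congr (_ * expR _); ring.
rewrite lerD ?sqr_expR_sub_shift_le //.
have -> : 4 * K ^+ 2 * eps ^+ 2 * expR (eps^-1 * `|z|)
    = K ^+ 2 * ((2 * eps) ^+ 2 * expR (eps^-1 * `|z|)) by ring.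
rewrite opprD addrA subrr sub0r sqrrN; apply: ler_wpM2l; first exact: sqr_ge0.
by rewrite -real_normK ?num_real // (exprS_norm_le_expR 1).
Qed.

End exp_or_lipschitz_increments.

Section nonneg_integral_bounds.
Local Open Scope ereal_scope.
Context d (T : measurableType d) (R : realType).
Variable mu : {measure set T -> \bar R}.

Lemma ge0_le_integral_nonmeasurable (f1 f2 : T -> \bar R) :
  (forall x, 0 <= f1 x) -> (forall x, f1 x <= f2 x) ->
  \int[mu]_x f1 x <= \int[mu]_x f2 x.
Proof.
move=> f10 f12; have f20 x : 0 <= f2 x := le_trans (f10 x) (f12 x).
rewrite (ge0_integralTE _ f10) (ge0_integralTE _ f20).
apply: ge_ereal_sup => _ [h hf1 <-]; apply: ereal_sup_ubound.
by exists h => // x; exact: le_trans (hf1 x) (f12 x).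
Qed.

Lemma ge0_integralD_le (f h : T -> R) (u v : R) :
  measurable_fun setT f -> measurable_fun setT h ->
  (forall x, (0 <= f x)%R) -> (forall x, (0 <= h x)%R) ->
  \int[mu]_x (f x)%:E <= u%:E -> \int[mu]_x (h x)%:E <= v%:E ->
  \int[mu]_x (f x + h x)%:E <= (u + v)%:E.
Proof.
move=> mf mh f0 h0 fu hv; under eq_integral do rewrite EFinD.
rewrite ge0_integralD //; last 4 first.
- by move=> x _; rewrite lee_fin.
- exact/measurable_realfun.measurable_EFinP.
- by move=> x _; rewrite lee_fin.
- exact/measurable_realfun.measurable_EFinP.
by rewrite EFinD leeD.
Qed.

Lemma ge0_integralZl_le (a u : R) (f : T -> R) : (0 <= a)%R ->
  measurable_fun setT f -> (forall x, (0 <= f x)%R) ->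
  \int[mu]_x (f x)%:E <= u%:E -> \int[mu]_x (a * f x)%:E <= (a * u)%:E.
Proof.
move=> a0 mf f0 fu; under eq_integral do rewrite EFinM.
rewrite ge0_integralZl_EFin //; last 2 first.
- by move=> x _; rewrite lee_fin.
- exact/measurable_realfun.measurable_EFinP.
by rewrite EFinM lee_wpmul2l ?lee_fin.
Qed.

End nonneg_integral_bounds.

Section subgaussian_moment_bounds.
Context d (T : measurableType d) (R : realType) (P : probability T R).

Lemma subgaussian_expR_norm_le (W : T -> R) (m s t : R) :
  measurable_fun setT W -> subgaussian P W m s ->
  ('E_P[fun w => expR (t * `|W w - m|)%R] <= (2 * expR (t ^+ 2 * s ^+ 2 / 2))%:E)%E.
Proof.
move=> mW [_ _ _]; rewrite unlock => mgf.
have mE u : measurable_fun setT (fun w => expR (u * (W w - m))).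
  apply: measurableT_comp => //; apply: measurableT_comp => //.
  exact: measurable_realfun.measurable_funB.
apply: le_trans (ge0_le_integral_nonmeasurable P
  (f2 := fun w => (expR (t * (W w - m)) + expR (- t * (W w - m)))%:E) _ _) _.
- by move=> w; rewrite lee_fin expR_ge0.
- by move=> w; rewrite lee_fin expR_mul_norm_le.
apply: le_trans (ge0_integralD_le (mE t) (mE (- t)) _ _ (mgf t) (mgf (- t))) _.
- by move=> w; exact: expR_ge0.
- by move=> w; exact: expR_ge0.
by rewrite sqrrN lee_fin mulr_natl mulr2n.
Qed.

End subgaussian_moment_bounds.

Section shift_second_moment.
Context d (T : measurableType d) (R : realType) (P : probability T R).
Variables (c K mu sigma eps : R) (g : R -> R) (X Z : T -> R).
Hypothesis hg : forall x y : R,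
  g x - g y <= Num.max `|expR (c * x) - expR (c * y)| (K * `|x - y|).
Hypotheses (eps0 : 0 < eps) (eps1 : eps <= 1).
Hypotheses (mX : measurable_fun setT X) (mZ : measurable_fun setT Z).
Hypotheses (sgX : subgaussian P X mu sigma) (sgZ : subgaussian P Z 0 eps).

Let f1 w := expR (4 * c * (X w - mu)).
Let f2 w := expR ((eps^-1 + 4 * `|c|) * `|Z w - 0|).
Let f3 w := expR (eps^-1 * `|Z w - 0|).

Let f1_ge0 w : 0 <= f1 w. Proof. exact: expR_ge0. Qed.
Let f2_ge0 w : 0 <= f2 w. Proof. exact: expR_ge0. Qed.
Let f3_ge0 w : 0 <= f3 w. Proof. exact: expR_ge0. Qed.

Let measurable_expR_mul (t : R) (h : T -> R) : measurable_fun setT h ->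
  measurable_fun setT (fun w => expR (t * h w)).
Proof. by move=> mh; apply: measurableT_comp => //; apply: measurableT_comp. Qed.

Let mf1 : measurable_fun setT f1.
Proof. by apply: measurable_expR_mul; exact: measurable_realfun.measurable_funB. Qed.

Let mnormZ : measurable_fun setT (fun w => `|Z w - 0|).
Proof. by apply: measurableT_comp => //; exact: measurable_realfun.measurable_funB. Qed.

Let mf2 : measurable_fun setT f2. Proof. exact: measurable_expR_mul. Qed.
Let mf3 : measurable_fun setT f3. Proof. exact: measurable_expR_mul. Qed.

Let moment_f1 :
  (\int[P]_w (f1 w)%:E <= (expR ((4 * c) ^+ 2 * sigma ^+ 2 / 2))%:E)%E.
Proof. by case: sgX => _ _ _ /(_ (4 * c)); rewrite unlock. Qed.

Let moment_f2 :
  (\int[P]_w (f2 w)%:E <= (2 * expR ((1 + 4 * `|c|) ^+ 2 / 2))%:E)%E.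
Proof.
have := subgaussian_expR_norm_le (eps^-1 + 4 * `|c|) mZ sgZ.
rewrite unlock => /le_trans; apply.
have th_eps : (eps^-1 + 4 * `|c|) * eps = 1 + 4 * `|c| * eps.
  by rewrite mulrDl mulVf ?gt_eqF.
have c0 := normr_ge0 c; have e0 := eps0; have e1 := eps1.
by rewrite lee_fin ler_pM2l // ler_expR ler_pM2r // -exprMn th_eps lerXn2r ?nnegrE //;
  nra.
Qed.

Let moment_f3 : (\int[P]_w (f3 w)%:E <= (2 * expR 2^-1)%:E)%E.
Proof.
have := subgaussian_expR_norm_le eps^-1 mZ sgZ.
rewrite unlock => /le_trans; apply.
by rewrite -exprMn mulVf ?gt_eqF // expr1n mul1r.
Qed.

Lemma expectation_sqr_shift_le :
  ('E_P[fun w => ((g (X w) - g (X w + Z w)) ^+ 2)%R] <=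
    (eps ^+ 2 / 2 * expR (4 * c * mu) * expR ((4 * c) ^+ 2 * sigma ^+ 2 / 2)
     + 128 * c ^+ 4 * eps ^+ 2 * (2 * expR ((1 + 4 * `|c|) ^+ 2 / 2))
     + 4 * K ^+ 2 * eps ^+ 2 * (2 * expR 2^-1))%:E)%E.
Proof.
set a1 := eps ^+ 2 / 2 * expR (4 * c * mu).
set a2 := 128 * c ^+ 4 * eps ^+ 2.
set a3 := 4 * K ^+ 2 * eps ^+ 2.
have a1_ge0 : 0 <= a1 by rewrite mulr_ge0 ?expR_ge0 ?divr_ge0 ?sqr_ge0 ?ler0n.
have a2_ge0 : 0 <= a2 by rewrite mulr_ge0 ?sqr_ge0 // mulr_ge0 // exprn_even_ge0.
have a3_ge0 : 0 <= a3 by rewrite mulr_ge0 ?sqr_ge0 // mulr_ge0 ?sqr_ge0.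
have mscale (a : R) (h : T -> R) : measurable_fun setT h ->
    measurable_fun setT (fun w => a * h w).
  by move=> mh; apply: measurableT_comp.
have scale_ge0 a (h : T -> R) : 0 <= a -> (forall w, 0 <= h w) ->
    forall w, 0 <= a * h w.
  by move=> a0 h0 w; rewrite mulr_ge0.
rewrite unlock; apply: le_trans (ge0_le_integral_nonmeasurable P
  (f2 := fun w => (a1 * f1 w + a2 * f2 w + a3 * f3 w)%:E) _ _) _.
- by move=> w; rewrite lee_fin sqr_ge0.
- by move=> w; rewrite lee_fin /f1 /f2 /f3 subr0; exact: sqr_shift_le_of_exp_lipschitz.
apply: ge0_integralD_le.
- exact: measurable_realfun.measurable_funD (mscale _ _ mf1) (mscale _ _ mf2).
- exact: mscale.
- by move=> w; rewrite addr_ge0 // scale_ge0.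
- exact: scale_ge0.
- apply: ge0_integralD_le; try exact: mscale; try exact: scale_ge0.
  + exact: ge0_integralZl_le moment_f1.
  + exact: ge0_integralZl_le moment_f2.
- exact: ge0_integralZl_le moment_f3.
Qed.

End shift_second_moment.

Theorem lemma1 (R : realType) (c_g K_g mu sigma : R) (hK : 0 <= K_g)
  (hsigma : 0 <= sigma) :
  exists C1 C' : R,
  forall g : R -> R,
    (forall x y : R,
        g x - g y <= Num.max `|expR (c_g * x) - expR (c_g * y)| (K_g * `|x - y|)) ->
  forall eps : R, 0 < eps -> eps <= 1 ->
  forall (d : measure_display) (T : measurableType d) (P : probability T R)
         (X Z : T -> R),
    measurable_fun setT X -> measurable_fun setT Z ->
    independent_rv P X Z ->
    subgaussian P X mu sigma ->
    subgaussian P Z 0 eps ->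
    let Y := fun w => X w + Z w in
    let S_X := fun w => g (X w) in
    let S_Y := fun w => g (Y w) in
    ('E_P[fun w => ((S_X w - S_Y w) ^+ 2)%R]
       <= (C1 * eps ^+ 2 + C' * eps ^+ 4)%:E)%E.
Proof.
exists (expR (4 * c_g * mu) / 2 * expR ((4 * c_g) ^+ 2 * sigma ^+ 2 / 2)
  + 256 * c_g ^+ 4 * expR ((1 + 4 * `|c_g|) ^+ 2 / 2)
  + 8 * K_g ^+ 2 * expR 2^-1), 0.
move=> g hg eps eps0 eps1 d T P X Z mX mZ _ sgX sgZ /=.
apply: le_trans (expectation_sqr_shift_le hg eps0 eps1 mX mZ sgX sgZ) _.
by rewrite lee_fin le_eqVlt; apply/predU1P; left; ring.
Qed.
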